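(* If $X$ is a cohesive almost zero-dimensional space and $K\subset X$ is $\sigma$-compact, then $X\setminus K$ is cohesive.
   Context: All spaces are separable and metrizable. A subset $A$ of $X$ is a C-set in $X$ if it is an intersection of clopen subsets of $X$. $X$ is almost zero-dimensional if every point has a neighborhood basis consisting of C-sets in $X$. $X$ is cohesive if every point $x\in X$ has a neighborhood which contains no non-empty clopen subset of $X$. *)

From Stdlib Require Import Reals List.
Open Scope R_scope.

(* A separable metric space (every separable metrizable space carries such a
   compatible metric; all notions below depend only on the topology). *)
Record SepMetricSpace := {
  carrier :> Type;
  dist : carrier -> carrier -> R;
  dist_nonneg : forall x y, 0 <= dist x y;
  dist_eq0 : forall x y, dist x y = 0 <-> x = y;
  dist_sym : forall x y, dist x y = dist y x;
  dist_tri : forall x y z, dist x z <= dist x y + dist y z;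
  separable : exists s : nat -> carrier,
      forall x eps, 0 < eps -> exists n, dist x (s n) < eps
}.

Section Topo.
Variable X : SepMetricSpace.

Definition set := X -> Prop.
Definition subset (A B : set) : Prop := forall x, A x -> B x.
Definition whole : set := fun _ => True.

(* All notions are relative to a subspace A of X with the induced topology. *)
Definition open_in (A U : set) : Prop :=
  subset U A /\
  forall x, U x -> exists eps, 0 < eps /\
    forall y, A y -> dist X x y < eps -> U y.

Definition closed_in (A F : set) : Prop :=
  subset F A /\ open_in A (fun x => A x /\ ~ F x).

Definition clopen_in (A U : set) : Prop := open_in A U /\ closed_in A U.

(* C-set in A: an intersection of (a family of) clopen subsets of A
   (the empty intersection being A itself). *)
Definition Cset_in (A C : set) : Prop :=
  exists Fam : set -> Prop,
    (forall U, Fam U -> clopen_in A U) /\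
    (forall x, C x <-> (A x /\ forall U, Fam U -> U x)).

Definition nbhd_in (A N : set) (x : X) : Prop :=
  subset N A /\ exists U, open_in A U /\ U x /\ subset U N.

Definition almost_zero_dim_in (A : set) : Prop :=
  forall x, A x -> forall U, nbhd_in A U x ->
    exists N, Cset_in A N /\ nbhd_in A N x /\ subset N U.

Definition cohesive_in (A : set) : Prop :=
  forall x, A x -> exists N, nbhd_in A N x /\
    forall C, clopen_in A C -> subset C N -> forall y, ~ C y.

Definition compact (K : set) : Prop :=
  forall Fam : set -> Prop,
    (forall U, Fam U -> open_in whole U) ->
    (forall x, K x -> exists U, Fam U /\ U x) ->
    exists l : list set, (forall U, In U l -> Fam U) /\
      (forall x, K x -> exists U, In U l /\ U x).

Definition sigma_compact (K : set) : Prop :=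
  exists Ks : nat -> set, (forall n, compact (Ks n)) /\
    (forall x, K x <-> exists n, Ks n x).

End Topo.

From Pilot Require Import Defs.
From Stdlib Require Import Reals List Lra Lia Classical IndefiniteDescription Cantor.
Open Scope R_scope.

(* Let x be outside K and let B(x,r) contain no non-empty clopen subset of X.
   A non-empty clopen subset C of X \ K inside B(x,r/2) would be separated from
   A = (X \ K \ C) ∪ (X \ B(x,r)), so A has an open neighbourhood W whose
   closure misses C, and the boundary of W lies in K.  By almost
   zero-dimensionality and separability, countably many C-sets M_k cover
   X \ cl W; each compact piece K_j of K is separated by a clopen set G_j from
   finitely many of them.  Then (X \ W) \ ⋃ G_j is clopen, meets C and lies
   in B(x,r): a contradiction. *)

Section MetricTopology.
Variable X : SepMetricSpace.
Local Notation d := (Defs.dist X).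

Definition ball (c : X) (r : R) : set X := fun y => d c y < r.

Definition is_open (U : set X) : Prop :=
  forall x, U x -> exists e, 0 < e /\ subset X (ball x e) U.

Definition is_closed (F : set X) : Prop := is_open (fun x => ~ F x).

Definition clopen (U : set X) : Prop := is_open U /\ is_closed U.

Definition closure (W : set X) : set X :=
  fun z => forall e, 0 < e -> exists w, W w /\ d z w < e.

Definition Cset (C : set X) : Prop :=
  exists Fam : set X -> Prop,
    (forall U, Fam U -> clopen U) /\ forall x, C x <-> forall U, Fam U -> U x.

Lemma dist_self (x : X) : d x x = 0.
Proof. now apply Defs.dist_eq0. Qed.

Lemma ball_center (x : X) (r : R) : 0 < r -> ball x r x.
Proof. intros Hr. unfold ball. now rewrite dist_self. Qed.

Lemma ball_mono (x : X) (r r' : R) : r <= r' -> subset X (ball x r) (ball x r').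
Proof. intros Hr y Hy. unfold ball in *. lra. Qed.

Lemma ball_open (c : X) (r : R) : is_open (ball c r).
Proof.
  intros x Hx. unfold ball in Hx. exists (r - d c x). split; [lra|].
  intros y Hy. unfold ball in *. pose proof (Defs.dist_tri X c x y). lra.
Qed.

Lemma is_open_ext (U V : set X) : (forall x, U x <-> V x) -> is_open U -> is_open V.
Proof.
  intros HUV HU x Vx. destruct (HU x (proj2 (HUV x) Vx)) as [e [He HeU]].
  exists e. split; [exact He|]. intros y Hy. now apply HUV, HeU.
Qed.

Lemma is_open_inter (U V : set X) :
  is_open U -> is_open V -> is_open (fun x => U x /\ V x).
Proof.
  intros HU HV x [Ux Vx].
  destruct (HU x Ux) as [e1 [He1 H1]], (HV x Vx) as [e2 [He2 H2]].
  exists (Rmin e1 e2). split; [now apply Rmin_glb_lt|].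
  intros y Hy. split.
  - apply H1. apply (ball_mono x (Rmin e1 e2)); [apply Rmin_l|exact Hy].
  - apply H2. apply (ball_mono x (Rmin e1 e2)); [apply Rmin_r|exact Hy].
Qed.

Lemma is_open_union (U V : set X) :
  is_open U -> is_open V -> is_open (fun x => U x \/ V x).
Proof.
  intros HU HV x [Ux|Vx].
  - destruct (HU x Ux) as [e [He HeU]]. exists e. split; [exact He|]. now left; apply HeU.
  - destruct (HV x Vx) as [e [He HeV]]. exists e. split; [exact He|]. now right; apply HeV.
Qed.

Lemma open_bounded_inter (U : nat -> set X) (n : nat) :
  (forall j, is_open (U j)) -> is_open (fun x => forall j, (j < n)%nat -> U j x).
Proof.
  intros HU. induction n as [|n IH].
  - intros x _. exists 1. split; [lra|]. intros y _ j Hj. lia.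
  - apply (is_open_ext (fun x => (forall j, (j < n)%nat -> U j x) /\ U n x)).
    + intros x. split.
      * intros [Hx Unx] j Hj. destruct (Nat.eq_dec j n) as [->|Hne]; [exact Unx|].
        apply Hx. lia.
      * intros Hx. split; [intros j Hj; apply Hx; lia | apply Hx; lia].
    + now apply is_open_inter.
Qed.

Lemma clopen_ext (U V : set X) : (forall x, U x <-> V x) -> clopen U -> clopen V.
Proof.
  intros HUV [HU HUc]. split.
  - exact (is_open_ext U V HUV HU).
  - apply (is_open_ext (fun x => ~ U x)); [|exact HUc]. intros x. now rewrite HUV.
Qed.

Lemma clopen_empty : clopen (fun _ => False).
Proof.
  split.
  - intros x [].
  - intros x _. exists 1. split; [lra|]. intros y _ [].
Qed.

Lemma clopen_compl (U : set X) : clopen U -> clopen (fun x => ~ U x).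
Proof.
  intros [HU HUc]. split; [exact HUc|].
  apply (is_open_ext U); [|exact HU]. intros x. split; [tauto|apply NNPP].
Qed.

Lemma clopen_union (U V : set X) : clopen U -> clopen V -> clopen (fun x => U x \/ V x).
Proof.
  intros [HU HUc] [HV HVc]. split; [now apply is_open_union|].
  apply (is_open_ext (fun x => ~ U x /\ ~ V x)); [intros x; tauto|].
  now apply is_open_inter.
Qed.

Lemma clopen_list_union (P : set X -> Prop) (l : list (set X)) :
  (forall V, In V l -> P V -> clopen V) ->
  clopen (fun x => exists V, In V l /\ P V /\ V x).
Proof.
  induction l as [|a l IH]; intros Hl.
  - apply (clopen_ext (fun _ => False)); [|exact clopen_empty].
    intros x. split; [intros []|intros [V [[] _]]].
  - assert (Hrest : clopen (fun x => exists V, In V l /\ P V /\ V x)).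
    { apply IH. intros V HV. apply Hl. now right. }
    destruct (classic (P a)) as [Pa|nPa].
    + apply (clopen_ext (fun x => a x \/ exists V, In V l /\ P V /\ V x)).
      * intros x. split.
        -- intros [ax|[V [HV [PV Vx]]]]; [exists a; now split; [left|]|].
           exists V. now split; [right|].
        -- intros [V [[<-|HV] [PV Vx]]]; [now left|right; now exists V].
      * apply clopen_union; [apply Hl; [now left|exact Pa]|exact Hrest].
    + apply (clopen_ext (fun x => exists V, In V l /\ P V /\ V x)); [|exact Hrest].
      intros x. split.
      * intros [V [HV [PV Vx]]]. exists V. now split; [right|].
      * intros [V [[<-|HV] [PV Vx]]]; [contradiction|now exists V].
Qed.

Lemma subset_closure (W : set X) : subset X W (closure W).
Proof. intros z Wz e He. exists z. split; [exact Wz|]. now rewrite dist_self. Qed.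

Lemma closure_mono (V W : set X) : subset X V W -> subset X (closure V) (closure W).
Proof.
  intros HVW z Hz e He. destruct (Hz e He) as [w [Vw Hw]].
  exists w. split; [now apply HVW|exact Hw].
Qed.

Lemma not_closure_iff (W : set X) (z : X) :
  ~ closure W z <-> exists e, 0 < e /\ forall w, W w -> e <= d z w.
Proof.
  split.
  - intros Hz. apply NNPP. intros Hn. apply Hz. intros e He.
    apply NNPP. intros Hno. apply Hn. exists e. split; [exact He|].
    intros w Ww. apply Rnot_lt_le. intros Hw. apply Hno. now exists w.
  - intros [e [He Hfar]] Hcl. destruct (Hcl e He) as [w [Ww Hw]].
    pose proof (Hfar w Ww). lra.
Qed.

Lemma closure_closed (W : set X) : is_closed (closure W).
Proof.
  intros z Hz. destruct (proj1 (not_closure_iff W z) Hz) as [e [He Hfar]].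
  exists (e / 2). split; [lra|]. intros y Hy. apply not_closure_iff.
  exists (e / 2). split; [lra|]. intros w Ww. unfold ball in Hy.
  pose proof (Hfar w Ww). pose proof (Defs.dist_tri X z y w). lra.
Qed.

Lemma not_closure_union (V W : set X) (z : X) :
  ~ closure V z -> ~ closure W z -> ~ closure (fun x => V x \/ W x) z.
Proof.
  rewrite !not_closure_iff. intros [e1 [He1 H1]] [e2 [He2 H2]].
  exists (Rmin e1 e2). split; [now apply Rmin_glb_lt|].
  intros w [Vw|Ww].
  - pose proof (H1 w Vw). pose proof (Rmin_l e1 e2). lra.
  - pose proof (H2 w Ww). pose proof (Rmin_r e1 e2). lra.
Qed.

Lemma separated_open_nbhd (A C : set X) :
  (forall a, C a -> ~ closure A a) -> (forall b, A b -> ~ closure C b) ->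
  exists W, is_open W /\ subset X A W /\ forall a, C a -> ~ closure W a.
Proof.
  intros HCA HAC.
  exists (fun z => exists b rho, A b /\ 0 < rho /\ (forall a, C a -> rho <= d b a) /\
                         ball b (rho / 2) z).
  split; [|split].
  - intros z [b [rho [Ab [Hrho [HbC Hz]]]]].
    destruct (ball_open b (rho / 2) z Hz) as [e [He Hsub]].
    exists e. split; [exact He|]. intros y Hy. exists b, rho. auto.
  - intros b Ab. destruct (proj1 (not_closure_iff C b) (HAC b Ab)) as [rho [Hrho HbC]].
    exists b, rho. repeat split; auto. apply ball_center. lra.
  - intros a Ca. apply not_closure_iff.
    destruct (proj1 (not_closure_iff A a) (HCA a Ca)) as [ra [Hra HaA]].
    exists (ra / 2). split; [lra|]. intros z [b [rho [Ab [Hrho [HbC Hz]]]]].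
    unfold ball in Hz. pose proof (HaA b Ab). pose proof (HbC a Ca).
    assert (d a b <= d a z + d b z) by (rewrite (Defs.dist_sym X b z); apply Defs.dist_tri).
    rewrite (Defs.dist_sym X b a) in *. lra.
Qed.

Lemma Cset_ext (C D : set X) : (forall x, C x <-> D x) -> Cset C -> Cset D.
Proof.
  intros HCD [Fam [HF HC]]. exists Fam. split; [exact HF|].
  intros x. rewrite <- HCD. apply HC.
Qed.

Lemma Cset_empty : Cset (fun _ => False).
Proof.
  exists (fun U => U = (fun _ => False)). split.
  - intros U ->. exact clopen_empty.
  - intros x. split; [intros []|]. intros Hx. exact (Hx _ eq_refl).
Qed.

Lemma Cset_union (C D : set X) : Cset C -> Cset D -> Cset (fun x => C x \/ D x).
Proof.
  intros [F1 [H1 E1]] [F2 [H2 E2]].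
  exists (fun V => exists U1 U2, F1 U1 /\ F2 U2 /\ V = (fun y => U1 y \/ U2 y)).
  split.
  - intros V [U1 [U2 [HU1 [HU2 ->]]]]. now apply clopen_union; auto.
  - intros x. split.
    + intros Hx V [U1 [U2 [HU1 [HU2 ->]]]].
      destruct Hx as [Cx|Dx]; [left; now apply E1|right; now apply E2].
    + intros Hx. apply NNPP. intros Hn.
      assert (exists U1, F1 U1 /\ ~ U1 x) as [U1 [HU1 nU1]].
      { apply NNPP. intros Hn1. apply Hn. left. apply E1. intros U HU.
        apply NNPP. intros nU. apply Hn1. now exists U. }
      assert (exists U2, F2 U2 /\ ~ U2 x) as [U2 [HU2 nU2]].
      { apply NNPP. intros Hn2. apply Hn. right. apply E2. intros U HU.
        apply NNPP. intros nU. apply Hn2. now exists U. }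
      destruct (Hx (fun y => U1 y \/ U2 y)); [now exists U1, U2|contradiction|contradiction].
Qed.

Lemma Cset_bounded_union (M : nat -> set X) (n : nat) :
  (forall k, Cset (M k)) -> Cset (fun z => exists k, (k <= n)%nat /\ M k z).
Proof.
  intros HM. induction n as [|n IH].
  - apply (Cset_ext (M 0%nat)); [|apply HM]. intros z. split.
    + intros Mz. now exists 0%nat.
    + intros [k [Hk Mkz]]. now replace k with 0%nat in Mkz by lia.
  - apply (Cset_ext (fun z => (exists k, (k <= n)%nat /\ M k z) \/ M (S n) z));
      [|now apply Cset_union].
    intros z. split.
    + intros [[k [Hk Mkz]]|Mz]; [exists k; split; [lia|exact Mkz]|now exists (S n)].
    + intros [k [Hk Mkz]]. destruct (Nat.eq_dec k (S n)) as [->|Hne]; [now right|].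
      left. exists k. split; [lia|exact Mkz].
Qed.

Lemma open_in_whole_iff (U : set X) : open_in X (whole X) U <-> is_open U.
Proof.
  split.
  - intros [_ HU] x Ux. destruct (HU x Ux) as [e [He HeU]].
    exists e. split; [exact He|]. intros y Hy. exact (HeU y I Hy).
  - intros HU. split; [intros x _; exact I|]. intros x Ux.
    destruct (HU x Ux) as [e [He HeU]]. exists e. split; [exact He|].
    intros y _ Hy. exact (HeU y Hy).
Qed.

Lemma clopen_in_whole_iff (U : set X) : clopen_in X (whole X) U <-> clopen U.
Proof.
  unfold clopen_in, closed_in, clopen, is_closed. rewrite !open_in_whole_iff.
  split.
  - intros [HU [_ HUc]]. split; [exact HU|].
    apply (is_open_ext (fun x => whole X x /\ ~ U x)); [|exact HUc].
    intros x. unfold whole. tauto.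
  - intros [HU HUc]. split; [exact HU|]. split; [intros x _; exact I|].
    apply (is_open_ext (fun x => ~ U x)); [|exact HUc]. intros x. unfold whole. tauto.
Qed.

Lemma Cset_in_whole_iff (C : set X) : Cset_in X (whole X) C <-> Cset C.
Proof.
  split; intros [Fam [HF HC]]; exists Fam; split.
  - intros U HU. apply clopen_in_whole_iff, HF, HU.
  - intros x. rewrite HC. unfold whole. tauto.
  - intros U HU. apply clopen_in_whole_iff, HF, HU.
  - intros x. rewrite HC. unfold whole. tauto.
Qed.

Lemma nbhd_in_whole_iff (N : set X) (x : X) :
  nbhd_in X (whole X) N x <-> exists e, 0 < e /\ subset X (ball x e) N.
Proof.
  split.
  - intros [_ [U [HU [Ux HUN]]]].
    destruct (proj1 (open_in_whole_iff U) HU x Ux) as [e [He HeU]].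
    exists e. split; [exact He|]. intros y Hy. now apply HUN, HeU.
  - intros [e [He HeN]]. split; [intros y _; exact I|].
    exists (ball x e). split; [apply open_in_whole_iff, ball_open|].
    split; [now apply ball_center|exact HeN].
Qed.

Lemma azd_Cset_nbhd (U : set X) (z : X) :
  almost_zero_dim_in X (whole X) -> is_open U -> U z ->
  exists N, Cset N /\ subset X N U /\ exists e, 0 < e /\ subset X (ball z e) N.
Proof.
  intros HA HU Uz. destruct (HA z I U) as [N [HN [HzN HNU]]].
  { apply nbhd_in_whole_iff. destruct (HU z Uz) as [e [He HeU]]. now exists e. }
  exists N. split; [now apply Cset_in_whole_iff|]. split; [exact HNU|].
  now apply nbhd_in_whole_iff.
Qed.

Lemma dense_ball_inside (s : nat -> X) :
  (forall x eps, 0 < eps -> exists n, d x (s n) < eps) ->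
  forall z e, 0 < e -> exists n m,
    ball (s n) (/ INR m) z /\ subset X (ball (s n) (/ INR m)) (ball z e).
Proof.
  intros Hs z e He. destruct (archimed_cor1 (e / 2)) as [m [Hm Hm0]]; [lra|].
  assert (Hr : 0 < / INR m) by (apply Rinv_0_lt_compat, lt_0_INR; exact Hm0).
  destruct (Hs z (/ INR m) Hr) as [n Hn]. exists n, m. split.
  - unfold ball. now rewrite Defs.dist_sym.
  - intros y Hy. unfold ball in *. pose proof (Defs.dist_tri X z (s n) y). lra.
Qed.

Lemma Cset_countable_cover (U : set X) :
  almost_zero_dim_in X (whole X) -> is_open U ->
  exists M : nat -> set X, (forall k, Cset (M k)) /\ (forall k, subset X (M k) U) /\
    forall z, U z -> exists k e, 0 < e /\ subset X (ball z e) (M k).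
Proof.
  intros HA HU. destruct (separable X) as [s Hs].
  set (basic := fun k => ball (s (fst (of_nat k))) (/ INR (snd (of_nat k)))).
  assert (Hchoice : forall k, exists M, Cset M /\ subset X M U /\
            ((exists N, Cset N /\ subset X N U /\ subset X (basic k) N) ->
             subset X (basic k) M)).
  { intros k. destruct (classic (exists N, Cset N /\ subset X N U /\ subset X (basic k) N))
      as [[N HN]|Hno].
    - exists N. tauto.
    - exists (fun _ => False). split; [exact Cset_empty|]. split; [intros _ []|].
      intros Hex. contradiction. }
  destruct (functional_choice _ Hchoice) as [M HM].
  exists M. split; [|split]; [intros k; apply HM..|].
  intros z Uz. destruct (azd_Cset_nbhd U z HA HU Uz) as [N [HN [HNU [e [He HeN]]]]].
  destruct (dense_ball_inside s Hs z e He) as [n [m [Hz Hsub]]].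
  assert (Hbasic : basic (to_nat (n, m)) = ball (s n) (/ INR m))
    by (unfold basic; now rewrite cancel_of_to).
  destruct (ball_open _ _ z Hz) as [e' [He' Hball]].
  exists (to_nat (n, m)), e'. split; [exact He'|]. intros y Hy.
  apply (proj2 (proj2 (HM _))).
  - exists N. rewrite Hbasic. split; [exact HN|]. split; [exact HNU|].
    intros w Hw. now apply HeN, Hsub.
  - rewrite Hbasic. now apply Hball.
Qed.

Lemma compact_Cset_separation (L D S : set X) :
  Defs.compact X L -> is_closed D -> Cset S -> (forall z, L z -> D z -> ~ S z) ->
  exists G, clopen G /\ (forall z, L z -> D z -> G z) /\ (forall z, G z -> ~ S z).
Proof.
  intros HL HD [Fam [HFam HS]] Hdisj.
  set (P := fun V : set X => exists U, Fam U /\ V = (fun y => ~ U y)).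
  destruct (HL (fun V => P V \/ V = (fun y => ~ D y))) as [l [Hl Hcov]].
  - intros V [[U [HU ->]]| ->]; apply open_in_whole_iff; [apply (HFam U HU)|exact HD].
  - intros z Lz. destruct (classic (D z)) as [Dz|nDz].
    + assert (exists U, Fam U /\ ~ U z) as [U [HU nUz]].
      { apply NNPP. intros Hn. apply (Hdisj z Lz Dz), HS. intros U HU.
        apply NNPP. intros nUz. apply Hn. now exists U. }
      exists (fun y => ~ U y). split; [left; now exists U|exact nUz].
    + exists (fun y => ~ D y). split; [now right|exact nDz].
  - exists (fun z => exists V, In V l /\ P V /\ V z). split; [|split].
    + apply clopen_list_union. intros V _ [U [HU ->]]. now apply clopen_compl, HFam.
    + intros z Lz Dz. destruct (Hcov z Lz) as [V [HV Vz]].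
      destruct (Hl V HV) as [PV| ->]; [now exists V|contradiction].
    + intros z [V [_ [[U [HU ->]] nUz]]] Sz. exact (nUz (proj1 (HS z) Sz U HU)).
Qed.

Lemma clopen_outside_locally_finite_union (W : set X) (G : nat -> set X) :
  is_open W -> (forall j, clopen (G j)) ->
  (forall z, ~ W z -> (forall j, ~ G j z) -> exists k e, 0 < e /\
     forall y, ball z e y -> ~ W y /\ forall j, (k <= j)%nat -> ~ G j y) ->
  clopen (fun z => ~ W z /\ forall j, ~ G j z).
Proof.
  intros HW HG Hloc. split.
  - intros z [nWz nGz]. destruct (Hloc z nWz nGz) as [k [e1 [He1 Hfar]]].
    destruct (open_bounded_inter (fun j y => ~ G j y) k (fun j => proj2 (HG j)) z
                (fun j _ => nGz j)) as [e2 [He2 Hnear]].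
    exists (Rmin e1 e2). split; [now apply Rmin_glb_lt|]. intros y Hy.
    assert (Hy1 : ball z e1 y) by (apply (ball_mono z (Rmin e1 e2)); [apply Rmin_l|exact Hy]).
    assert (Hy2 : ball z e2 y) by (apply (ball_mono z (Rmin e1 e2)); [apply Rmin_r|exact Hy]).
    split; [exact (proj1 (Hfar y Hy1))|]. intros j.
    destruct (Nat.lt_ge_cases j k) as [Hjk|Hjk].
    + exact (Hnear y Hy2 j Hjk).
    + exact (proj2 (Hfar y Hy1) j Hjk).
  - intros z Hz. destruct (classic (W z)) as [Wz|nWz].
    + destruct (HW z Wz) as [e [He HeW]]. exists e. split; [exact He|].
      intros y Hy [nWy _]. exact (nWy (HeW y Hy)).
    + assert (exists j, G j z) as [j Gjz].
      { apply NNPP. intros Hn. apply Hz. split; [exact nWz|].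
        intros j Gjz. apply Hn. now exists j. }
      destruct (proj1 (HG j) z Gjz) as [e [He HeG]].
      exists e. split; [exact He|]. intros y Hy [_ nGy]. exact (nGy j (HeG y Hy)).
Qed.

Lemma clopen_nbhd_avoiding_open (Ks : nat -> set X) (W : set X) (p : X) :
  (forall n, Defs.compact X (Ks n)) -> almost_zero_dim_in X (whole X) -> is_open W ->
  ~ closure W p -> (forall z, closure W z -> ~ W z -> exists n, Ks n z) ->
  exists F, clopen F /\ F p /\ forall z, F z -> ~ W z.
Proof.
  intros HKc HA HW Hp Hbd.
  destruct (Cset_countable_cover (fun z => ~ closure W z) HA (closure_closed W))
    as [M [HMC [HMW HMcov]]].
  destruct (HMcov p Hp) as [k0 [e0 [He0 Hk0]]].
  set (S := fun j z => exists k, (k <= j + k0)%nat /\ M k z).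
  assert (HG : forall j, exists G, clopen G /\
            (forall z, Ks j z -> closure W z -> G z) /\ forall z, G z -> ~ S j z).
  { intros j. apply compact_Cset_separation;
      [apply HKc|apply closure_closed|now apply Cset_bounded_union|].
    intros z _ Hz [k [_ Mz]]. exact (HMW k z Mz Hz). }
  destruct (functional_choice _ HG) as [G HGspec].
  exists (fun z => ~ W z /\ forall j, ~ G j z). split; [|split].
  - apply clopen_outside_locally_finite_union; [exact HW|intros j; apply HGspec|].
    intros z nWz nGz.
    assert (Hz : ~ closure W z).
    { intros Hcl. destruct (Hbd z Hcl nWz) as [n Kn]. apply (nGz n). now apply HGspec. }
    destruct (HMcov z Hz) as [k [e [He Hk]]].
    exists k, e. split; [exact He|]. intros y Hy. split.
    + intros Wy. exact (HMW k y (Hk y Hy) (subset_closure W y Wy)).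
    + intros j Hkj Gjy. apply (proj2 (proj2 (HGspec j)) y Gjy).
      exists k. split; [lia|now apply Hk].
  - split.
    + intros Wp. exact (Hp (subset_closure W p Wp)).
    + intros j Gjp. apply (proj2 (proj2 (HGspec j)) p Gjp).
      exists k0. split; [lia|]. now apply Hk0, ball_center.
  - intros z [nWz _]. exact nWz.
Qed.

Lemma cohesive_ball (x : X) :
  cohesive_in X (whole X) ->
  exists r, 0 < r /\ forall F, clopen F -> subset X F (ball x r) -> forall y, ~ F y.
Proof.
  intros Hcoh. destruct (Hcoh x I) as [N [HxN HN]].
  destruct (proj1 (nbhd_in_whole_iff N x) HxN) as [r [Hr HrN]].
  exists r. split; [exact Hr|]. intros F HF HFr. apply HN.
  - now apply clopen_in_whole_iff.
  - intros y Fy. now apply HrN, HFr.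
Qed.

Lemma nbhd_in_ball (A : set X) (x : X) (r : R) :
  A x -> 0 < r -> nbhd_in X A (fun y => A y /\ ball x r y) x.
Proof.
  intros Ax Hr. split; [intros y [Ay _]; exact Ay|].
  exists (fun y => A y /\ ball x r y). split; [|split].
  - split; [intros y [Ay _]; exact Ay|]. intros y [_ Hy].
    destruct (ball_open x r y Hy) as [e [He Hsub]].
    exists e. split; [exact He|]. intros z Az Hz. split; [exact Az|now apply Hsub].
  - split; [exact Ax|now apply ball_center].
  - intros y Hy. exact Hy.
Qed.

Lemma clopen_in_separated (A C : set X) :
  clopen_in X A C ->
  (forall a, C a -> ~ closure (fun b => A b /\ ~ C b) a) /\
  (forall b, A b -> ~ C b -> ~ closure C b).
Proof.
  intros [[_ HCo] [HCA [_ HCc]]]. split.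
  - intros a Ca Hcl. destruct (HCo a Ca) as [e [He HeC]].
    destruct (Hcl e He) as [b [[Ab nCb] Hb]]. exact (nCb (HeC b Ab Hb)).
  - intros b Ab nCb Hcl. destruct (HCc b (conj Ab nCb)) as [e [He HeC]].
    destruct (Hcl e He) as [a [Ca Ha]]. exact (proj2 (HeC a (HCA a Ca) Ha) Ca).
Qed.

Lemma ball_separated (x : X) (r : R) :
  0 < r ->
  (forall a, ball x (r / 2) a -> ~ closure (fun b => ~ ball x r b) a) /\
  (forall b, ~ ball x r b -> ~ closure (ball x (r / 2)) b).
Proof.
  intros Hr. unfold ball. split.
  - intros a Ha Hcl. destruct (Hcl (r / 2)) as [b [Hb Hab]]; [lra|].
    apply Hb. pose proof (Defs.dist_tri X x a b). lra.
  - intros b Hb Hcl. destruct (Hcl (r / 2)) as [a [Ha Hba]]; [lra|].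
    apply Hb. pose proof (Defs.dist_tri X x a b). rewrite (Defs.dist_sym X a b) in *. lra.
Qed.

End MetricTopology.

Theorem theorem4p10 (X : SepMetricSpace) (K : set X) :
  cohesive_in X (whole X) ->
  almost_zero_dim_in X (whole X) ->
  sigma_compact X K ->
  cohesive_in X (fun x => ~ K x).
Proof.
  intros Hcoh HA [Ks [HKc HK]] x Kx.
  destruct (cohesive_ball X x Hcoh) as [r [Hr Hno]].
  exists (fun y => ~ K y /\ ball X x (r / 2) y).
  split; [apply nbhd_in_ball; [exact Kx|lra]|].
  intros C HC HCr y Cy.
  set (A := fun b => (~ K b /\ ~ C b) \/ ~ ball X x r b).
  destruct (clopen_in_separated X _ _ HC) as [HCA HAC].
  destruct (ball_separated X x r Hr) as [Hin Hout].
  destruct (separated_open_nbhd X A C) as [W [HW [HAW HCW]]].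
  - intros a Ca. apply not_closure_union; [now apply HCA|apply Hin, HCr, Ca].
  - intros b [[Kb Cb]|Hb]; [now apply HAC|]. intros Hcl. apply (Hout b Hb).
    apply (closure_mono X C); [intros z Cz; apply HCr, Cz|exact Hcl].
  - destruct (clopen_nbhd_avoiding_open X Ks W y HKc HA HW (HCW y Cy))
      as [F [HF [Fy FW]]].
    + intros z Hcl nWz. apply HK, NNPP. intros nKz. apply nWz, HAW. left.
      split; [exact nKz|]. intros Cz. exact (HCW z Cz Hcl).
    + apply (Hno F HF) with y; [|exact Fy]. intros z Fz.
      apply NNPP. intros Hz. apply (FW z Fz), HAW. now right.
Qed.
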